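(* Let $\epsilon\in\mathbb C\setminus\{0\}$, $\eta_1(x,y;z)=(1-xz)^{-\epsilon}e^{yz}=\sum_{k\ge0}F_1^k(x,y)z^k$, so $F^k_1(x,y)=\sum_{i+j=k}\frac{(\epsilon)_i}{i!\,j!}x^iy^j$ with $(\epsilon)_i=\epsilon(\epsilon+1)\cdots(\epsilon+i-1)$. Then: (a) $x\frac{\partial^2\eta_1}{\partial x\partial y}=\frac{\partial\eta_1}{\partial x}-\epsilon\frac{\partial\eta_1}{\partial y}$, and $\frac{\partial F_1^{k+1}}{\partial y}=F_1^k$, $\frac1\epsilon\frac{\partial F_1^{k+1}}{\partial x}=\sum_{i+j=k}x^iF_1^j$ for all $k\ge0$. (b) Let $m\ge1$, $\Phi_1(\mathbf t;x,y)=\sum_{k=0}^m t_kF_1^{k+1}(x,y)$, and let $(u_1(\mathbf t),u_2(\mathbf t))$ be a $C^1$ map with $\partial_x\Phi_1=\partial_y\Phi_1=0$ at $(x,y)=(u_1,u_2)$, such that at this point $u_1\neq0$, $\partial_x^2\Phi_1\neq0$ and $\partial_y^2\Phi_1\neq0$. Then for $k=1,\dots,m$, \[ \frac{\partial u_1}{\partial t_k}=\lambda_1^k\frac{\partial u_1}{\partial t_0},\qquad \frac{\partial u_2}{\partial t_k}=\lambda_2^k\frac{\partial u_2}{\partial t_0}, \qquad \lambda_1^k=\sum_{i+j=k}u_1^iF_1^j(u_1,u_2),\quad \lambda_2^k=F_1^k(u_1,u_2). \] In particular for $k=1$: $\lambda_1^1=(1+\epsilon)u_1+u_2$, $\lambda_2^1=\epsilon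 u_1+u_2$. *)

From Stdlib Require Import Reals Arith Factorial ClassicalEpsilon.
Open Scope R_scope.

Definition Cx : Type := (R * R)%type.
Definition RtoC (a : R) : Cx := (a, 0).
Definition Czero : Cx := (0, 0).
Definition Cone : Cx := (1, 0).
Definition Cadd (z w : Cx) : Cx := (fst z + fst w, snd z + snd w).
Definition Copp (z : Cx) : Cx := (- fst z, - snd z).
Definition Csub (z w : Cx) : Cx := Cadd z (Copp w).
Definition Cmul (z w : Cx) : Cx :=
  (fst z * fst w - snd z * snd w, fst z * snd w + snd z * fst w).
Definition Cinv (z : Cx) : Cx :=
  (fst z / (fst z ^ 2 + snd z ^ 2), - snd z / (fst z ^ 2 + snd z ^ 2)).
Definition Cdiv (z w : Cx) : Cx := Cmul z (Cinv w).
Definition Cnorm (z : Cx) : R := sqrt (fst z ^ 2 + snd z ^ 2).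
Fixpoint Cpow (z : Cx) (n : nat) : Cx :=
  match n with O => Cone | S n' => Cmul z (Cpow z n') end.
Definition Cnat (n : nat) : Cx := RtoC (INR n).

(* Csum f n = f 0 + ... + f (n-1) *)
Fixpoint Csum (f : nat -> Cx) (n : nat) : Cx :=
  match n with O => Czero | S n' => Cadd (Csum f n') (f n') end.
Fixpoint Cprod (f : nat -> Cx) (n : nat) : Cx :=
  match n with O => Cone | S n' => Cmul (Cprod f n') (f n') end.

Definition poch (e : Cx) (i : nat) : Cx := Cprod (fun l => Cadd e (Cnat l)) i.

Definition F1 (eps : Cx) (k : nat) (x y : Cx) : Cx :=
  Csum (fun i => Cmul (Cdiv (poch eps i)
                            (Cmul (Cnat (fact i)) (Cnat (fact (k - i)))))
                      (Cmul (Cpow x i) (Cpow y (k - i)))) (S k).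

Definition Clim0 (g : Cx -> Cx) (L : Cx) : Prop :=
  forall e, 0 < e -> exists d, 0 < d /\
    forall h, h <> Czero -> Cnorm h < d -> Cnorm (Csub (g h) L) < e.

Definition Cderiv (f : Cx -> Cx) (z L : Cx) : Prop :=
  Clim0 (fun h => Cdiv (Csub (f (Cadd z h)) (f z)) h) L.

(* the derivative value (meaningful when it exists; it is unique) *)
Definition theC (P : Cx -> Prop) : Cx := epsilon (inhabits Czero) P.

Definition pdx (f : Cx -> Cx -> Cx) (x y L : Cx) : Prop := Cderiv (fun s => f s y) x L.
Definition pdy (f : Cx -> Cx -> Cx) (x y L : Cx) : Prop := Cderiv (fun s => f x s) y L.
Definition dx (f : Cx -> Cx -> Cx) (x y : Cx) : Cx := theC (pdx f x y).
Definition dy (f : Cx -> Cx -> Cx) (x y : Cx) : Cx := theC (pdy f x y).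

(* parameters t = (t_0, ..., t_m) are encoded as t : nat -> Cx *)
Definition upd (t : nat -> Cx) (k : nat) (s : Cx) : nat -> Cx :=
  fun j => if Nat.eqb j k then s else t j.
Definition pdt (u : (nat -> Cx) -> Cx) (t : nat -> Cx) (k : nat) (L : Cx) : Prop :=
  Cderiv (fun s => u (upd t k s)) (t k) L.
Definition dt (u : (nat -> Cx) -> Cx) (k : nat) (t : nat -> Cx) : Cx := theC (pdt u t k).

Definition near (m : nat) (r : R) (t t' : nat -> Cx) : Prop :=
  forall j, (j <= m)%nat -> Cnorm (Csub (t' j) (t j)) < r.

Definition isOpen (m : nat) (D : (nat -> Cx) -> Prop) : Prop :=
  forall t, D t -> exists r, 0 < r /\ forall t', near m r t t' -> D t'.

Definition C1_on (m : nat) (D : (nat -> Cx) -> Prop) (u : (nat -> Cx) -> Cx) : Prop :=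
  forall k, (k <= m)%nat ->
    (forall t, D t -> pdt u t k (dt u k t)) /\
    (forall t, D t -> forall e, 0 < e -> exists r, 0 < r /\
        forall t', D t' -> near m r t t' -> Cnorm (Csub (dt u k t') (dt u k t)) < e).

Definition Phi1 (eps : Cx) (m : nat) (t : nat -> Cx) (x y : Cx) : Cx :=
  Csum (fun k => Cmul (t k) (F1 eps (S k) x y)) (S m).

Definition lam1 (eps : Cx) (k : nat) (a b : Cx) : Cx :=
  Csum (fun i => Cmul (Cpow a i) (F1 eps (k - i) a b)) (S k).
Definition lam2 (eps : Cx) (k : nat) (a b : Cx) : Cx := F1 eps k a b.

From Stdlib Require Import Reals Factorial ClassicalEpsilon FunctionalExtensionality.
From Stdlib Require Import Lra Lia Psatz.
From Coquelicot Require Complex.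
Open Scope R_scope.

(* The F_1^k are the coefficients of eta_1, and differentiating eta_1 = (1-xz)^(-eps) e^(yz)
   gives d_y eta_1 = z eta_1 and d_x eta_1 = eps z eta_1 / (1 - xz); read coefficientwise,
   d_y F^(k+1) = F^k and d_x F^(k+1) = eps lam_1^k.  Writing M^k = d_y lam_1^k, one has
   x M^k = lam_1^k - F^k, which is (a).
   For (b), Phi_1 is linear in t, so differentiating the critical equations Phi_x = Phi_y = 0
   at (u_1(t), u_2(t)) with respect to t_k gives
     eps lam_1^k + Phi_xx d_k u_1 + Phi_xy d_k u_2 = 0,   F^k + Phi_xy d_k u_1 + Phi_yy d_k u_2 = 0.
   By (a), u_1 Phi_xy = Phi_x - eps Phi_y = 0 there, so u_1 <> 0 forces Phi_xy = 0; the system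
   decouples, and comparing index k with index 0 (where lam_1^0 = F^0 = 1) gives the ratios. *)

(* [Cx] and its operations are definitionally Coquelicot's complex numbers. *)
Lemma C_field : field_theory Czero Cone Cadd Cmul Csub Copp Cdiv Cinv (@eq Cx).
Proof. exact Complex.C_field_theory. Qed.
Add Field C_field : C_field.

Lemma Cnorm_triangle (z w : Cx) : Cnorm (Cadd z w) <= Cnorm z + Cnorm w.
Proof. exact (Complex.Cmod_triangle z w). Qed.

Lemma Cnorm_mul (z w : Cx) : Cnorm (Cmul z w) = Cnorm z * Cnorm w.
Proof. exact (Complex.Cmod_mult z w). Qed.

Lemma Cnorm_opp (z : Cx) : Cnorm (Copp z) = Cnorm z.
Proof. exact (Complex.Cmod_opp z). Qed.

Lemma Cnorm_ge0 (z : Cx) : 0 <= Cnorm z.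
Proof. exact (Complex.Cmod_ge_0 z). Qed.

Lemma Cnorm_eq0 (z : Cx) : Cnorm z = 0 -> z = Czero.
Proof. exact (Complex.Cmod_eq_0 z). Qed.

Lemma Cnorm_0 : Cnorm Czero = 0.
Proof. exact Complex.Cmod_0. Qed.

Lemma Cnorm_RtoC (r : R) : 0 <= r -> Cnorm (RtoC r) = r.
Proof.
  intros Hr. change (Complex.Cmod (Complex.RtoC r) = r).
  rewrite Complex.Cmod_R. exact (Rabs_right r (Rle_ge 0 r Hr)).
Qed.

Lemma Cnat_0 : Cnat 0 = Czero. Proof. reflexivity. Qed.
Lemma Cnat_1 : Cnat 1 = Cone. Proof. reflexivity. Qed.

Lemma Cnat_S (n : nat) : Cnat (S n) = Cadd (Cnat n) Cone.
Proof. unfold Cnat, RtoC, Cadd, Cone. rewrite S_INR. cbn [fst snd]. f_equal; ring. Qed.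

Lemma Cnat_mul (a b : nat) : Cnat (a * b) = Cmul (Cnat a) (Cnat b).
Proof. unfold Cnat, RtoC, Cmul. rewrite mult_INR. cbn [fst snd]. f_equal; ring. Qed.

Lemma Cnat_neq0 (n : nat) : n <> O -> Cnat n <> Czero.
Proof. intros Hn E. apply (not_0_INR n Hn). unfold Cnat, RtoC in E. now injection E. Qed.

Lemma Cnat_fact_neq0 (n : nat) : Cnat (fact n) <> Czero.
Proof. apply Cnat_neq0, fact_neq_0. Qed.

Lemma Cone_neq0 : Cone <> Czero.
Proof. intros E. injection E. lra. Qed.

Lemma Cmul_reg_l (x p : Cx) : x <> Czero -> Cmul x p = Czero -> p = Czero.
Proof.
  intros Hx H. transitivity (Cmul (Cinv x) (Cmul x p)); [field; exact Hx|].
  rewrite H. ring.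
Qed.

Lemma Clim0_ext (g k : Cx -> Cx) (L : Cx) :
  (forall h, h <> Czero -> g h = k h) -> Clim0 g L -> Clim0 k L.
Proof.
  intros E H e He. destruct (H e He) as [d [Hd Hh]]. exists d; split; [exact Hd|].
  intros h Hn Hl. rewrite <- E by exact Hn. auto.
Qed.

Lemma Clim0_const (c : Cx) : Clim0 (fun _ => c) c.
Proof.
  intros e He. exists 1; split; [lra|]. intros h _ _.
  replace (Csub c c) with Czero by ring. rewrite Cnorm_0. exact He.
Qed.

Lemma Clim0_id : Clim0 (fun h => h) Czero.
Proof.
  intros e He. exists e; split; [exact He|]. intros h _ Hl.
  replace (Csub h Czero) with h by ring. exact Hl.
Qed.

Lemma Clim0_add (g k : Cx -> Cx) (L M : Cx) : Clim0 g L -> Clim0 k M ->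
  Clim0 (fun h => Cadd (g h) (k h)) (Cadd L M).
Proof.
  intros Hg Hk e He.
  destruct (Hg (e / 2)) as [d1 [Hd1 H1]]; [lra|].
  destruct (Hk (e / 2)) as [d2 [Hd2 H2]]; [lra|].
  exists (Rmin d1 d2); split; [now apply Rmin_pos|].
  intros h Hn Hl.
  assert (A1 := H1 h Hn (Rlt_le_trans _ _ _ Hl (Rmin_l _ _))).
  assert (A2 := H2 h Hn (Rlt_le_trans _ _ _ Hl (Rmin_r _ _))).
  replace (Csub (Cadd (g h) (k h)) (Cadd L M))
    with (Cadd (Csub (g h) L) (Csub (k h) M)) by ring.
  eapply Rle_lt_trans; [apply Cnorm_triangle|]. lra.
Qed.

Lemma Clim0_mul (g k : Cx -> Cx) (L M : Cx) : Clim0 g L -> Clim0 k M ->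
  Clim0 (fun h => Cmul (g h) (k h)) (Cmul L M).
Proof.
  intros Hg Hk e He.
  assert (HL := Cnorm_ge0 L). assert (HM := Cnorm_ge0 M).
  (* [e'] is chosen so that [e'^2 + e' (|L| + |M|) <= e]. *)
  set (e' := Rmin 1 (e / (1 + Cnorm L + Cnorm M))).
  assert (He' : 0 < e') by (apply Rmin_pos; [lra|apply Rdiv_lt_0_compat; lra]).
  assert (He'1 : e' <= 1) by apply Rmin_l.
  assert (He'e : e' * (1 + Cnorm L + Cnorm M) <= e).
  { assert (Hr : e' <= e / (1 + Cnorm L + Cnorm M)) by apply Rmin_r.
    apply (Rmult_le_compat_r (1 + Cnorm L + Cnorm M)) in Hr; [|lra].
    unfold Rdiv in Hr. rewrite Rmult_assoc, Rinv_l in Hr; lra. }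
  destruct (Hg e' He') as [d1 [Hd1 H1]].
  destruct (Hk e' He') as [d2 [Hd2 H2]].
  exists (Rmin d1 d2); split; [now apply Rmin_pos|].
  intros h Hn Hl.
  assert (A1 := H1 h Hn (Rlt_le_trans _ _ _ Hl (Rmin_l _ _))).
  assert (A2 := H2 h Hn (Rlt_le_trans _ _ _ Hl (Rmin_r _ _))).
  replace (Csub (Cmul (g h) (k h)) (Cmul L M)) with
    (Cadd (Cmul (Csub (g h) L) (Csub (k h) M))
      (Cadd (Cmul L (Csub (k h) M)) (Cmul M (Csub (g h) L)))) by ring.
  eapply Rle_lt_trans; [apply Cnorm_triangle|].
  eapply Rle_lt_trans; [apply Rplus_le_compat_l, Cnorm_triangle|].
  rewrite !Cnorm_mul.
  assert (B1 := Cnorm_ge0 (Csub (g h) L)). assert (B2 := Cnorm_ge0 (Csub (k h) M)).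
  nra.
Qed.

Lemma Clim0_unique (g : Cx -> Cx) (L1 L2 : Cx) : Clim0 g L1 -> Clim0 g L2 -> L1 = L2.
Proof.
  intros H1 H2. destruct (Req_dec (Cnorm (Csub L1 L2)) 0) as [E|E].
  { apply Cnorm_eq0 in E. replace L1 with (Cadd (Csub L1 L2) L2) by ring. rewrite E. ring. }
  assert (P : 0 < Cnorm (Csub L1 L2)) by (assert (Q := Cnorm_ge0 (Csub L1 L2)); lra).
  set (e := Cnorm (Csub L1 L2) / 2).
  destruct (H1 e) as [d1 [Hd1 A1]]; [unfold e; lra|].
  destruct (H2 e) as [d2 [Hd2 A2]]; [unfold e; lra|].
  assert (Hd : 0 < Rmin d1 d2) by now apply Rmin_pos.
  assert (Hd1' := Rmin_l d1 d2). assert (Hd2' := Rmin_r d1 d2).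
  set (h := RtoC (Rmin d1 d2 / 2)).
  assert (Hh : Cnorm h = Rmin d1 d2 / 2) by (apply Cnorm_RtoC; lra).
  assert (hn : h <> Czero) by (intro Q; rewrite Q, Cnorm_0 in Hh; lra).
  specialize (A1 h hn ltac:(lra)). specialize (A2 h hn ltac:(lra)).
  (* |L1 - L2| <= |g h - L2| + |g h - L1| < 2 e = |L1 - L2| *)
  assert (T := Cnorm_triangle (Csub (g h) L2) (Copp (Csub (g h) L1))).
  replace (Cadd (Csub (g h) L2) (Copp (Csub (g h) L1))) with (Csub L1 L2) in T by ring.
  rewrite Cnorm_opp in T. unfold e in *. lra.
Qed.

Lemma Cderiv_unique (f : Cx -> Cx) (z L1 L2 : Cx) :
  Cderiv f z L1 -> Cderiv f z L2 -> L1 = L2.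
Proof. apply Clim0_unique. Qed.

Lemma Cderiv_eq_deriv (f : Cx -> Cx) (z L L' : Cx) : Cderiv f z L -> L = L' -> Cderiv f z L'.
Proof. now intros H <-. Qed.

Lemma Cderiv_const (c z : Cx) : Cderiv (fun _ => c) z Czero.
Proof.
  unfold Cderiv. apply Clim0_ext with (fun _ => Czero); [|apply Clim0_const].
  intros h Hh; cbv beta. field. exact Hh.
Qed.

Lemma Cderiv_id (z : Cx) : Cderiv (fun s => s) z Cone.
Proof.
  unfold Cderiv. apply Clim0_ext with (fun _ => Cone); [|apply Clim0_const].
  intros h Hh; cbv beta. field. exact Hh.
Qed.

Lemma Cderiv_add (f g : Cx -> Cx) (z L M : Cx) : Cderiv f z L -> Cderiv g z M ->
  Cderiv (fun s => Cadd (f s) (g s)) z (Cadd L M).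
Proof.
  intros Hf Hg. eapply Clim0_ext; [|exact (Clim0_add _ _ _ _ Hf Hg)].
  intros h Hh; cbv beta. field. exact Hh.
Qed.

Lemma Cderiv_mul (f g : Cx -> Cx) (z L M : Cx) : Cderiv f z L -> Cderiv g z M ->
  Cderiv (fun s => Cmul (f s) (g s)) z (Cadd (Cmul L (g z)) (Cmul (f z) M)).
Proof.
  intros Hf Hg.
  set (Qg := fun h => Cdiv (Csub (g (Cadd z h)) (g z)) h) in *.
  (* [g (z + h) = g z + h Qg h] tends to [g z] *)
  assert (Hgz : Clim0 (fun h => Cadd (g z) (Cmul h (Qg h))) (Cadd (g z) (Cmul Czero M))).
  { apply Clim0_add; [apply Clim0_const|]. exact (Clim0_mul _ _ _ _ Clim0_id Hg). }
  assert (X := Clim0_add _ _ _ _ (Clim0_mul _ _ _ _ Hf Hgz)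
                 (Clim0_mul _ _ _ _ (Clim0_const (f z)) Hg)).
  eapply Cderiv_eq_deriv; [eapply Clim0_ext; [|exact X]|ring].
  intros h Hh; unfold Qg; cbv beta. field. exact Hh.
Qed.

Lemma Cderiv_pow (a : Cx -> Cx) (z a' : Cx) (n : nat) : Cderiv a z a' ->
  Cderiv (fun s => Cpow (a s) n) z (Cmul (Cmul (Cnat n) (Cpow (a z) (n - 1))) a').
Proof.
  intros Ha. induction n as [|n IHn]; simpl.
  - eapply Cderiv_eq_deriv; [apply Cderiv_const|]. rewrite Cnat_0. ring.
  - eapply Cderiv_eq_deriv; [exact (Cderiv_mul _ _ _ _ _ Ha IHn)|].
    destruct n as [|n]; simpl.
    + rewrite Cnat_0, Cnat_1. ring.
    + rewrite Nat.sub_0_r, (Cnat_S (S n)). ring.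
Qed.

Lemma Cderiv_sum (f : nat -> Cx -> Cx) (f' : nat -> Cx) (z : Cx) (n : nat) :
  (forall j, (j < n)%nat -> Cderiv (f j) z (f' j)) ->
  Cderiv (fun s => Csum (fun j => f j s) n) z (Csum f' n).
Proof.
  induction n as [|n IHn]; intros H; simpl.
  - apply Cderiv_const.
  - apply Cderiv_add; auto.
Qed.

Lemma Cderiv_locally_zero (g : Cx -> Cx) (z L : Cx) (r : R) : 0 < r -> Cderiv g z L ->
  (forall h, Cnorm h < r -> g (Cadd z h) = Czero) -> L = Czero.
Proof.
  intros Hr H E.
  assert (Ez : g z = Czero).
  { replace z with (Cadd z Czero) by ring. apply E. rewrite Cnorm_0. exact Hr. }
  apply (Cderiv_unique (fun _ => Czero) z); [|apply Cderiv_const].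
  intros e He. destruct (H e He) as [d [Hd A]].
  exists (Rmin d r); split; [now apply Rmin_pos|].
  intros h Hn Hl.
  assert (Eh : g (Cadd z h) = Czero) by (apply E; eapply Rlt_le_trans; [exact Hl|apply Rmin_r]).
  specialize (A h Hn (Rlt_le_trans _ _ _ Hl (Rmin_l _ _))). rewrite Eh, Ez in A. exact A.
Qed.

(* [Cdiff2 f fx fy]: [f] is differentiable with partial derivatives [fx], [fy] in the sense
   that the chain rule holds along every pair of differentiable curves.  This notion is
   closed under the ring operations, and the curves [s |-> (s, y)], [s |-> (x, s)] recover
   [pdx] and [pdy]. *)
Definition Cdiff2 (f fx fy : Cx -> Cx -> Cx) : Prop :=
  forall a b z a' b', Cderiv a z a' -> Cderiv b z b' ->
    Cderiv (fun s => f (a s) (b s)) z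
      (Cadd (Cmul (fx (a z) (b z)) a') (Cmul (fy (a z) (b z)) b')).

Lemma Cdiff2_ext (f fx fy g gx gy : Cx -> Cx -> Cx) : Cdiff2 f fx fy ->
  (forall x y, f x y = g x y) -> (forall x y, fx x y = gx x y) ->
  (forall x y, fy x y = gy x y) -> Cdiff2 g gx gy.
Proof.
  intros H E Ex Ey a b z a' b' Ha Hb.
  replace (fun s => g (a s) (b s)) with (fun s => f (a s) (b s))
    by (apply functional_extensionality; intro; apply E).
  rewrite <- Ex, <- Ey. exact (H a b z a' b' Ha Hb).
Qed.

Lemma Cdiff2_const (c : Cx) : Cdiff2 (fun _ _ => c) (fun _ _ => Czero) (fun _ _ => Czero).
Proof. intros a b z a' b' _ _. eapply Cderiv_eq_deriv; [apply Cderiv_const|]. cbv beta; ring. Qed.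

Lemma Cdiff2_add (f fx fy g gx gy : Cx -> Cx -> Cx) : Cdiff2 f fx fy -> Cdiff2 g gx gy ->
  Cdiff2 (fun x y => Cadd (f x y) (g x y)) (fun x y => Cadd (fx x y) (gx x y))
    (fun x y => Cadd (fy x y) (gy x y)).
Proof.
  intros Hf Hg a b z a' b' Ha Hb.
  eapply Cderiv_eq_deriv; [exact (Cderiv_add _ _ _ _ _ (Hf _ _ _ _ _ Ha Hb) (Hg _ _ _ _ _ Ha Hb))|].
  cbv beta; ring.
Qed.

Lemma Cdiff2_mul (f fx fy g gx gy : Cx -> Cx -> Cx) : Cdiff2 f fx fy -> Cdiff2 g gx gy ->
  Cdiff2 (fun x y => Cmul (f x y) (g x y))
    (fun x y => Cadd (Cmul (fx x y) (g x y)) (Cmul (f x y) (gx x y)))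
    (fun x y => Cadd (Cmul (fy x y) (g x y)) (Cmul (f x y) (gy x y))).
Proof.
  intros Hf Hg a b z a' b' Ha Hb.
  eapply Cderiv_eq_deriv; [exact (Cderiv_mul _ _ _ _ _ (Hf _ _ _ _ _ Ha Hb) (Hg _ _ _ _ _ Ha Hb))|].
  cbv beta; ring.
Qed.

Lemma Cdiff2_scale (c : Cx) (f fx fy : Cx -> Cx -> Cx) : Cdiff2 f fx fy ->
  Cdiff2 (fun x y => Cmul c (f x y)) (fun x y => Cmul c (fx x y)) (fun x y => Cmul c (fy x y)).
Proof.
  intros H. eapply Cdiff2_ext; [exact (Cdiff2_mul _ _ _ _ _ _ (Cdiff2_const c) H)| | |];
  intros; cbv beta; ring.
Qed.

Lemma Cdiff2_sum (f fx fy : nat -> Cx -> Cx -> Cx) (n : nat) :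
  (forall i, Cdiff2 (f i) (fx i) (fy i)) ->
  Cdiff2 (fun x y => Csum (fun i => f i x y) n) (fun x y => Csum (fun i => fx i x y) n)
    (fun x y => Csum (fun i => fy i x y) n).
Proof.
  intros H. induction n as [|n IHn]; simpl.
  - apply Cdiff2_const.
  - exact (Cdiff2_add _ _ _ _ _ _ IHn (H n)).
Qed.

Lemma Cdiff2_pow_x (n : nat) : Cdiff2 (fun x _ => Cpow x n)
  (fun x _ => Cmul (Cnat n) (Cpow x (n - 1))) (fun _ _ => Czero).
Proof.
  intros a b z a' b' Ha _. eapply Cderiv_eq_deriv; [exact (Cderiv_pow _ _ _ n Ha)|]. cbv beta; ring.
Qed.

Lemma Cdiff2_pow_y (n : nat) : Cdiff2 (fun _ y => Cpow y n)
  (fun _ _ => Czero) (fun _ y => Cmul (Cnat n) (Cpow y (n - 1))).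
Proof.
  intros a b z a' b' _ Hb. eapply Cderiv_eq_deriv; [exact (Cderiv_pow _ _ _ n Hb)|]. cbv beta; ring.
Qed.

Lemma Cdiff2_pdx (f fx fy : Cx -> Cx -> Cx) (x y : Cx) : Cdiff2 f fx fy -> pdx f x y (fx x y).
Proof.
  intros H. eapply Cderiv_eq_deriv; [exact (H _ _ x _ _ (Cderiv_id x) (Cderiv_const y x))|].
  cbv beta; ring.
Qed.

Lemma Cdiff2_pdy (f fx fy : Cx -> Cx -> Cx) (x y : Cx) : Cdiff2 f fx fy -> pdy f x y (fy x y).
Proof.
  intros H. eapply Cderiv_eq_deriv; [exact (H _ _ y _ _ (Cderiv_const x y) (Cderiv_id y))|].
  cbv beta; ring.
Qed.

Lemma theC_unique (P : Cx -> Prop) (v : Cx) : P v -> (forall w, P w -> w = v) -> theC P = v.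
Proof. intros Hv U. apply U. unfold theC. apply epsilon_spec. now exists v. Qed.

Lemma Cdiff2_dx (f fx fy : Cx -> Cx -> Cx) : Cdiff2 f fx fy -> dx f = fx.
Proof.
  intros H. do 2 (apply functional_extensionality; intro).
  apply theC_unique; [exact (Cdiff2_pdx _ _ _ _ _ H)|].
  intros w Hw. exact (Cderiv_unique _ _ _ _ Hw (Cdiff2_pdx _ _ _ _ _ H)).
Qed.

Lemma Cdiff2_dy (f fx fy : Cx -> Cx -> Cx) : Cdiff2 f fx fy -> dy f = fy.
Proof.
  intros H. do 2 (apply functional_extensionality; intro).
  apply theC_unique; [exact (Cdiff2_pdy _ _ _ _ _ H)|].
  intros w Hw. exact (Cderiv_unique _ _ _ _ Hw (Cdiff2_pdy _ _ _ _ _ H)).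
Qed.

Lemma Csum_ext (f g : nat -> Cx) (n : nat) :
  (forall i, (i < n)%nat -> f i = g i) -> Csum f n = Csum g n.
Proof.
  induction n as [|n IHn]; intros H; simpl; [reflexivity|].
  rewrite IHn, H; [reflexivity|lia|intros; apply H; lia].
Qed.

Lemma Csum_S (f : nat -> Cx) (n : nat) : Csum f (S n) = Cadd (Csum f n) (f n).
Proof. reflexivity. Qed.

Lemma Csum_Sl (f : nat -> Cx) (n : nat) :
  Csum f (S n) = Cadd (f O) (Csum (fun i => f (S i)) n).
Proof. induction n as [|n IHn]; simpl in *; [ring|]. rewrite IHn. ring. Qed.

Lemma Csum_add (f g : nat -> Cx) (n : nat) :
  Csum (fun i => Cadd (f i) (g i)) n = Cadd (Csum f n) (Csum g n).
Proof. induction n as [|n IHn]; simpl; [ring|]. rewrite IHn. ring. Qed.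

Lemma Csum_sub (f g : nat -> Cx) (n : nat) :
  Csum (fun i => Csub (f i) (g i)) n = Csub (Csum f n) (Csum g n).
Proof. induction n as [|n IHn]; simpl; [ring|]. rewrite IHn. ring. Qed.

Lemma Csum_mul_l (c : Cx) (f : nat -> Cx) (n : nat) :
  Csum (fun i => Cmul c (f i)) n = Cmul c (Csum f n).
Proof. induction n as [|n IHn]; simpl; [ring|]. rewrite IHn. ring. Qed.

Lemma Csum_mul_r (c : Cx) (f : nat -> Cx) (n : nat) :
  Csum (fun i => Cmul (f i) c) n = Cmul (Csum f n) c.
Proof. induction n as [|n IHn]; simpl; [ring|]. rewrite IHn. ring. Qed.

Lemma Csum_indicator (X : nat -> Cx) (k n : nat) : (k < n)%nat ->
  Csum (fun j => Cmul (if Nat.eqb j k then Cone else Czero) (X j)) n = X k.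
Proof.
  induction n as [|n IHn]; intros Hk; [lia|]. rewrite Csum_S.
  destruct (Nat.eqb_spec n k) as [->|Hnk].
  - replace (Csum _ k) with Czero; [ring|].
    assert (Z : forall p, (p <= k)%nat ->
      Csum (fun j => Cmul (if Nat.eqb j k then Cone else Czero) (X j)) p = Czero).
    { induction p as [|p IHp]; intros Hp; [reflexivity|].
      rewrite Csum_S, IHp, (proj2 (Nat.eqb_neq p k)) by lia. ring. }
    symmetry. apply Z. lia.
  - rewrite IHn by lia. ring.
Qed.

Section F1_calculus.
Variable eps : Cx.

Definition F1_coef (i j : nat) : Cx :=
  Cdiv (poch eps i) (Cmul (Cnat (fact i)) (Cnat (fact j))).
Definition F1_term (n i : nat) (x y : Cx) : Cx :=
  Cmul (F1_coef i (n - i)) (Cmul (Cpow x i) (Cpow y (n - i))).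
Definition F1_term_dx (n i : nat) (x y : Cx) : Cx :=
  Cmul (F1_coef i (n - i)) (Cmul (Cmul (Cnat i) (Cpow x (i - 1))) (Cpow y (n - i))).
Definition F1_term_dy (n i : nat) (x y : Cx) : Cx :=
  Cmul (F1_coef i (n - i)) (Cmul (Cpow x i) (Cmul (Cnat (n - i)) (Cpow y (n - i - 1)))).
Definition F1_dx (n : nat) (x y : Cx) : Cx := Csum (fun i => F1_term_dx n i x y) (S n).
Definition F1_dy (n : nat) (x y : Cx) : Cx := Csum (fun i => F1_term_dy n i x y) (S n).

Lemma Cdiff2_F1_termwise (n : nat) : Cdiff2 (F1 eps n) (F1_dx n) (F1_dy n).
Proof.
  apply (Cdiff2_sum (F1_term n) (F1_term_dx n) (F1_term_dy n)). intro i.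
  eapply Cdiff2_ext;
    [exact (Cdiff2_scale (F1_coef i (n - i)) _ _ _
              (Cdiff2_mul _ _ _ _ _ _ (Cdiff2_pow_x i) (Cdiff2_pow_y (n - i))))| | |];
    intros; unfold F1_term, F1_term_dx, F1_term_dy; ring.
Qed.

Lemma F1_coef_Sr (i j : nat) : Cmul (F1_coef i (S j)) (Cnat (S j)) = F1_coef i j.
Proof.
  unfold F1_coef. change (fact (S j)) with (S j * fact j)%nat. rewrite Cnat_mul.
  assert (A := Cnat_fact_neq0 i). assert (B := Cnat_fact_neq0 j).
  assert (C := Cnat_neq0 (S j) ltac:(lia)). field. auto.
Qed.

Lemma F1_coef_Sl (i j : nat) :
  Cmul (F1_coef (S i) j) (Cnat (S i)) = Cmul (Cadd eps (Cnat i)) (F1_coef i j).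
Proof.
  unfold F1_coef. change (fact (S i)) with (S i * fact i)%nat. rewrite Cnat_mul.
  change (poch eps (S i)) with (Cmul (poch eps i) (Cadd eps (Cnat i))).
  assert (A := Cnat_fact_neq0 i). assert (B := Cnat_fact_neq0 j).
  assert (C := Cnat_neq0 (S i) ltac:(lia)). field. auto.
Qed.

Lemma F1_0 (x y : Cx) : F1 eps 0 x y = Cone.
Proof. unfold F1, poch. simpl. rewrite Cnat_1. field. exact Cone_neq0. Qed.

Lemma F1_1 (x y : Cx) : F1 eps 1 x y = Cadd (Cmul eps x) y.
Proof. unfold F1, poch. simpl. rewrite Cnat_1, Cnat_0. field. exact Cone_neq0. Qed.

Lemma F1_dy_0 (x y : Cx) : F1_dy 0 x y = Czero.
Proof. unfold F1_dy, F1_term_dy. simpl. rewrite Cnat_0. ring. Qed.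

Lemma F1_dy_S (n : nat) (x y : Cx) : F1_dy (S n) x y = F1 eps n x y.
Proof.
  unfold F1_dy. rewrite Csum_S. unfold F1_term_dy at 2. rewrite Nat.sub_diag, Cnat_0.
  transitivity (Csum (fun i => F1_term_dy (S n) i x y) (S n)); [ring|].
  apply Csum_ext. intros i Hi. unfold F1_term_dy.
  replace (S n - i)%nat with (S (n - i)) by lia.
  replace (S (n - i) - 1)%nat with (n - i)%nat by lia.
  fold (F1_coef i (n - i)). rewrite <- (F1_coef_Sr i (n - i)). ring.
Qed.

Lemma F1_dx_0 (x y : Cx) : F1_dx 0 x y = Czero.
Proof. unfold F1_dx, F1_term_dx. simpl. rewrite Cnat_0. ring. Qed.

(* The common value of d_x F^(n+1) and eps lam_1^n. *)
Definition F1_weighted (n : nat) (x y : Cx) : Cx :=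
  Csum (fun i => Cmul (Cadd eps (Cnat i)) (F1_term n i x y)) (S n).

Lemma F1_dx_S_weighted (n : nat) (x y : Cx) : F1_dx (S n) x y = F1_weighted n x y.
Proof.
  unfold F1_dx. rewrite Csum_Sl. unfold F1_term_dx at 1. rewrite Cnat_0.
  transitivity (Csum (fun i => F1_term_dx (S n) (S i) x y) (S n)); [ring|].
  apply Csum_ext. intros i Hi. unfold F1_term_dx, F1_term.
  change (S n - S i)%nat with (n - i)%nat. replace (S i - 1)%nat with i by lia.
  transitivity (Cmul (Cmul (F1_coef (S i) (n - i)) (Cnat (S i)))
                     (Cmul (Cpow x i) (Cpow y (n - i)))); [ring|].
  rewrite F1_coef_Sl. ring.
Qed.

Lemma F1_weighted_S (n : nat) (x y : Cx) :
  F1_weighted (S n) x y = Cadd (Cmul eps (F1 eps (S n) x y)) (Cmul x (F1_weighted n x y)).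
Proof.
  transitivity (Cadd (Cmul eps (F1 eps (S n) x y))
     (Csum (fun i => Cmul (Cnat i) (F1_term (S n) i x y)) (S (S n)))).
  { unfold F1_weighted.
    change (F1 eps (S n) x y) with (Csum (fun i => F1_term (S n) i x y) (S (S n))).
    rewrite <- Csum_mul_l, <- Csum_add. apply Csum_ext; intros; ring. }
  f_equal. rewrite Csum_Sl, Cnat_0. unfold F1_weighted. rewrite <- Csum_mul_l.
  transitivity (Csum (fun i => Cmul (Cnat (S i)) (F1_term (S n) (S i) x y)) (S n)); [ring|].
  apply Csum_ext. intros i Hi. unfold F1_term.
  change (S n - S i)%nat with (n - i)%nat. simpl Cpow.
  transitivity (Cmul x (Cmul (Cmul (F1_coef (S i) (n - i)) (Cnat (S i)))
                              (Cmul (Cpow x i) (Cpow y (n - i))))); [ring|].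
  rewrite F1_coef_Sl. ring.
Qed.

Lemma lam1_0 (x y : Cx) : lam1 eps 0 x y = Cone.
Proof. unfold lam1. simpl. rewrite F1_0. ring. Qed.

Lemma lam1_S (n : nat) (x y : Cx) :
  lam1 eps (S n) x y = Cadd (F1 eps (S n) x y) (Cmul x (lam1 eps n x y)).
Proof.
  unfold lam1. rewrite Csum_Sl, <- Csum_mul_l. simpl Cpow. rewrite Nat.sub_0_r.
  f_equal; [ring|]. apply Csum_ext. intros i Hi.
  change (S n - S i)%nat with (n - i)%nat. ring.
Qed.

Lemma lam1_1 (x y : Cx) : lam1 eps 1 x y = Cadd (Cmul (Cadd Cone eps) x) y.
Proof. rewrite lam1_S, lam1_0, F1_1. ring. Qed.

Lemma F1_weighted_lam1 (n : nat) (x y : Cx) : F1_weighted n x y = Cmul eps (lam1 eps n x y).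
Proof.
  induction n as [|n IHn].
  - unfold F1_weighted, F1_term, F1_coef, poch. simpl. rewrite lam1_0, Cnat_0, Cnat_1.
    field. exact Cone_neq0.
  - rewrite F1_weighted_S, IHn, lam1_S. ring.
Qed.

Lemma F1_dx_S (n : nat) (x y : Cx) : F1_dx (S n) x y = Cmul eps (lam1 eps n x y).
Proof. rewrite F1_dx_S_weighted. apply F1_weighted_lam1. Qed.

Definition lam1_dx (n : nat) (x y : Cx) : Cx := Csum (fun i =>
  Cadd (Cmul (Cmul (Cnat i) (Cpow x (i - 1))) (F1 eps (n - i) x y))
       (Cmul (Cpow x i) (F1_dx (n - i) x y))) (S n).
Definition lam1_dy (n : nat) (x y : Cx) : Cx :=
  Csum (fun i => Cmul (Cpow x i) (F1_dy (n - i) x y)) (S n).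

Lemma Cdiff2_lam1 (n : nat) : Cdiff2 (lam1 eps n) (lam1_dx n) (lam1_dy n).
Proof.
  eapply Cdiff2_ext.
  - apply (Cdiff2_sum (fun i x y => Cmul (Cpow x i) (F1 eps (n - i) x y))). intro i.
    exact (Cdiff2_mul _ _ _ _ _ _ (Cdiff2_pow_x i) (Cdiff2_F1_termwise (n - i))).
  - reflexivity.
  - reflexivity.
  - intros. apply Csum_ext. intros. ring.
Qed.

Lemma lam1_dy_0 (x y : Cx) : lam1_dy 0 x y = Czero.
Proof. unfold lam1_dy. simpl. rewrite F1_dy_0. ring. Qed.

Lemma lam1_dy_S (n : nat) (x y : Cx) : lam1_dy (S n) x y = lam1 eps n x y.
Proof.
  unfold lam1_dy. rewrite Csum_S, Nat.sub_diag, F1_dy_0.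
  transitivity (Csum (fun i => Cmul (Cpow x i) (F1_dy (S n - i) x y)) (S n)); [ring|].
  apply Csum_ext. intros i Hi.
  replace (S n - i)%nat with (S (n - i)) by lia. rewrite F1_dy_S. reflexivity.
Qed.

Lemma lam1_dy_mul_x (n : nat) (x y : Cx) :
  Cmul x (lam1_dy n x y) = Csub (lam1 eps n x y) (F1 eps n x y).
Proof.
  destruct n as [|n].
  - rewrite lam1_dy_0, lam1_0, F1_0. ring.
  - rewrite lam1_dy_S, lam1_S. ring.
Qed.

Lemma F1_dx_lam1_dy (n : nat) (x y : Cx) : F1_dx n x y = Cmul eps (lam1_dy n x y).
Proof.
  destruct n as [|n].
  - rewrite F1_dx_0, lam1_dy_0. ring.
  - rewrite F1_dx_S, lam1_dy_S. reflexivity.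
Qed.

Lemma Cdiff2_F1 (n : nat) :
  Cdiff2 (F1 eps n) (fun x y => Cmul eps (lam1_dy n x y)) (F1_dy n).
Proof.
  eapply Cdiff2_ext; [exact (Cdiff2_F1_termwise n)|reflexivity|exact (F1_dx_lam1_dy n)|reflexivity].
Qed.

Lemma Cdiff2_F1_0 : Cdiff2 (F1 eps 0) (fun _ _ => Czero) (fun _ _ => Czero).
Proof.
  eapply Cdiff2_ext; [exact (Cdiff2_F1_termwise 0)|reflexivity|exact F1_dx_0|exact F1_dy_0].
Qed.

Lemma Cdiff2_F1_S (n : nat) :
  Cdiff2 (F1 eps (S n)) (fun x y => Cmul eps (lam1 eps n x y)) (F1 eps n).
Proof.
  eapply Cdiff2_ext; [exact (Cdiff2_F1_termwise (S n))|reflexivity|exact (F1_dx_S n)|].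
  exact (F1_dy_S n).
Qed.

End F1_calculus.

Lemma F1_derivative_identities (eps : Cx) (k : nat) (x y : Cx) : eps <> Czero ->
     (pdx (F1 eps k) x y (dx (F1 eps k) x y) /\
      pdy (F1 eps k) x y (dy (F1 eps k) x y) /\
      exists Lxy, pdy (dx (F1 eps k)) x y Lxy /\
        Cmul x Lxy = Csub (dx (F1 eps k) x y) (Cmul eps (dy (F1 eps k) x y))) /\
     pdy (F1 eps (S k)) x y (F1 eps k x y) /\
     (exists L, pdx (F1 eps (S k)) x y L /\
        Cmul (Cinv eps) L = Csum (fun i => Cmul (Cpow x i) (F1 eps (k - i) x y)) (S k)).
Proof.
  intros Heps. split; [split; [|split]|split].
  - rewrite (Cdiff2_dx _ _ _ (Cdiff2_F1 eps k)). exact (Cdiff2_pdx _ _ _ x y (Cdiff2_F1 eps k)).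
  - rewrite (Cdiff2_dy _ _ _ (Cdiff2_F1 eps k)). exact (Cdiff2_pdy _ _ _ x y (Cdiff2_F1 eps k)).
  - destruct k as [|n].
    + exists Czero. rewrite (Cdiff2_dx _ _ _ (Cdiff2_F1_0 eps)), (Cdiff2_dy _ _ _ (Cdiff2_F1_0 eps)).
      split; [exact (Cderiv_const Czero y)|ring].
    + exists (Cmul eps (lam1_dy eps n x y)).
      rewrite (Cdiff2_dx _ _ _ (Cdiff2_F1_S eps n)), (Cdiff2_dy _ _ _ (Cdiff2_F1_S eps n)).
      split; [exact (Cdiff2_pdy _ _ _ x y (Cdiff2_scale eps _ _ _ (Cdiff2_lam1 eps n)))|].
      transitivity (Cmul eps (Cmul x (lam1_dy eps n x y))); [ring|].
      rewrite lam1_dy_mul_x. ring.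
  - exact (Cdiff2_pdy _ _ _ x y (Cdiff2_F1_S eps k)).
  - exists (Cmul eps (lam1 eps k x y)). split; [exact (Cdiff2_pdx _ _ _ x y (Cdiff2_F1_S eps k))|].
    unfold lam1. field. exact Heps.
Qed.

Definition lin_comb (t : nat -> Cx) (G : nat -> Cx -> Cx -> Cx) (m : nat) (x y : Cx) : Cx :=
  Csum (fun j => Cmul (t j) (G j x y)) (S m).

Lemma Cdiff2_lin_comb (t : nat -> Cx) (G Gx Gy : nat -> Cx -> Cx -> Cx) (m : nat) :
  (forall j, Cdiff2 (G j) (Gx j) (Gy j)) ->
  Cdiff2 (lin_comb t G m) (lin_comb t Gx m) (lin_comb t Gy m).
Proof.
  intros HG. apply (Cdiff2_sum (fun j x y => Cmul (t j) (G j x y))). intro j.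
  exact (Cdiff2_scale (t j) _ _ _ (HG j)).
Qed.

Lemma upd_same (t : nat -> Cx) (k : nat) : upd t k (t k) = t.
Proof.
  apply functional_extensionality; intro j. unfold upd.
  destruct (Nat.eqb_spec j k) as [->|]; reflexivity.
Qed.

Lemma near_upd (m : nat) (r : R) (t : nat -> Cx) (k : nat) (h : Cx) :
  0 < r -> Cnorm h < r -> near m r t (upd t k (Cadd (t k) h)).
Proof.
  intros Hr Hh j _. unfold upd. destruct (Nat.eqb_spec j k) as [->|].
  - replace (Csub (Cadd (t k) h) (t k)) with h by ring. exact Hh.
  - replace (Csub (t j) (t j)) with Czero by ring. rewrite Cnorm_0. exact Hr.
Qed.

Lemma Cderiv_lin_comb_upd (t : nat -> Cx) (k m : nat) (G Gx Gy : nat -> Cx -> Cx -> Cx)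
    (a b : Cx -> Cx) (a' b' : Cx) :
  (forall j, Cdiff2 (G j) (Gx j) (Gy j)) -> Cderiv a (t k) a' -> Cderiv b (t k) b' ->
  (k <= m)%nat ->
  Cderiv (fun s => lin_comb (upd t k s) G m (a s) (b s)) (t k)
    (Cadd (G k (a (t k)) (b (t k)))
       (Cadd (Cmul (lin_comb t Gx m (a (t k)) (b (t k))) a')
             (Cmul (lin_comb t Gy m (a (t k)) (b (t k))) b'))).
Proof.
  intros HG Ha Hb Hk. set (x := a (t k)). set (y := b (t k)).
  eapply Cderiv_eq_deriv.
  - apply (Cderiv_sum _ (fun j => Cadd (Cmul (if Nat.eqb j k then Cone else Czero) (G j x y))
                                       (Cmul (t j) (Cadd (Cmul (Gx j x y) a') (Cmul (Gy j x y) b'))))).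
    intros j _.
    assert (Hu : Cderiv (fun s => upd t k s j) (t k) (if Nat.eqb j k then Cone else Czero)).
    { unfold upd. destruct (Nat.eqb j k); [apply Cderiv_id|apply Cderiv_const]. }
    eapply Cderiv_eq_deriv; [exact (Cderiv_mul _ _ _ _ _ Hu (HG j _ _ _ _ _ Ha Hb))|].
    cbv beta. rewrite upd_same. reflexivity.
  - rewrite Csum_add, Csum_indicator by lia. f_equal.
    unfold lin_comb. rewrite <- !Csum_mul_r, <- Csum_add. apply Csum_ext; intros; ring.
Qed.

Lemma lin_comb_level_set_deriv (m : nat) (D : (nat -> Cx) -> Prop) (G Gx Gy : nat -> Cx -> Cx -> Cx)
    (u1 u2 : (nat -> Cx) -> Cx) (t : nat -> Cx) (k : nat) (a' b' : Cx) :
  (forall j, Cdiff2 (G j) (Gx j) (Gy j)) -> isOpen m D ->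
  (forall t', D t' -> lin_comb t' G m (u1 t') (u2 t') = Czero) ->
  D t -> (k <= m)%nat -> pdt u1 t k a' -> pdt u2 t k b' ->
  Cadd (G k (u1 t) (u2 t))
    (Cadd (Cmul (lin_comb t Gx m (u1 t) (u2 t)) a')
          (Cmul (lin_comb t Gy m (u1 t) (u2 t)) b')) = Czero.
Proof.
  intros HG HD Hlevel Ht Hk Ha Hb.
  destruct (HD t Ht) as [r [Hr Hball]].
  assert (Hd := Cderiv_lin_comb_upd t k m G Gx Gy (fun s => u1 (upd t k s))
                  (fun s => u2 (upd t k s)) a' b' HG Ha Hb Hk).
  cbv beta in Hd. rewrite upd_same in Hd.
  apply (Cderiv_locally_zero _ _ _ r Hr Hd).
  intros h Hh. exact (Hlevel _ (Hball _ (near_upd m r t k h Hr Hh))).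
Qed.

Definition Phi1_x (eps : Cx) (m : nat) (t : nat -> Cx) : Cx -> Cx -> Cx :=
  lin_comb t (fun j x y => Cmul eps (lam1 eps j x y)) m.
Definition Phi1_y (eps : Cx) (m : nat) (t : nat -> Cx) : Cx -> Cx -> Cx :=
  lin_comb t (F1 eps) m.
Definition Phi1_xx (eps : Cx) (m : nat) (t : nat -> Cx) : Cx -> Cx -> Cx :=
  lin_comb t (fun j x y => Cmul eps (lam1_dx eps j x y)) m.
Definition Phi1_xy (eps : Cx) (m : nat) (t : nat -> Cx) : Cx -> Cx -> Cx :=
  lin_comb t (fun j x y => Cmul eps (lam1_dy eps j x y)) m.
Definition Phi1_yy (eps : Cx) (m : nat) (t : nat -> Cx) : Cx -> Cx -> Cx :=
  lin_comb t (F1_dy eps) m.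

Lemma Cdiff2_Phi1 (eps : Cx) (m : nat) (t : nat -> Cx) :
  Cdiff2 (Phi1 eps m t) (Phi1_x eps m t) (Phi1_y eps m t).
Proof. exact (Cdiff2_lin_comb t _ _ _ m (Cdiff2_F1_S eps)). Qed.

Lemma Cdiff2_Phi1_x (eps : Cx) (m : nat) (t : nat -> Cx) :
  Cdiff2 (Phi1_x eps m t) (Phi1_xx eps m t) (Phi1_xy eps m t).
Proof.
  apply Cdiff2_lin_comb. intro j. exact (Cdiff2_scale eps _ _ _ (Cdiff2_lam1 eps j)).
Qed.

Lemma Cdiff2_Phi1_y (eps : Cx) (m : nat) (t : nat -> Cx) :
  Cdiff2 (Phi1_y eps m t) (Phi1_xy eps m t) (Phi1_yy eps m t).
Proof. exact (Cdiff2_lin_comb t _ _ _ m (Cdiff2_F1 eps)). Qed.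

Lemma Phi1_xy_mul_x (eps : Cx) (m : nat) (t : nat -> Cx) (x y : Cx) :
  Cmul x (Phi1_xy eps m t x y) = Csub (Phi1_x eps m t x y) (Cmul eps (Phi1_y eps m t x y)).
Proof.
  unfold Phi1_xy, Phi1_x, Phi1_y, lin_comb.
  rewrite <- Csum_mul_l, <- Csum_mul_l, <- Csum_sub. apply Csum_ext. intros j _.
  transitivity (Cmul (Cmul (t j) eps) (Cmul x (lam1_dy eps j x y))); [ring|].
  rewrite lam1_dy_mul_x. ring.
Qed.

Lemma Clinear_ratio (P e L a ak : Cx) : P <> Czero -> Cadd e (Cmul P a) = Czero ->
  Cadd (Cmul e L) (Cmul P ak) = Czero -> ak = Cmul L a.
Proof.
  intros HP H1 H2.
  transitivity (Cadd (Cdiv (Csub (Cadd (Cmul e L) (Cmul P ak)) (Cmul L (Cadd e (Cmul P a)))) P)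
                     (Cmul L a)); [field; exact HP|].
  rewrite H1, H2. field. exact HP.
Qed.

Section Critical_point.
Variables (eps : Cx) (m : nat) (D : (nat -> Cx) -> Prop) (u1 u2 : (nat -> Cx) -> Cx).
Hypothesis D_open : isOpen m D.
Hypothesis u1_C1 : C1_on m D u1.
Hypothesis u2_C1 : C1_on m D u2.
Hypothesis critical : forall t, D t ->
  dx (Phi1 eps m t) (u1 t) (u2 t) = Czero /\
  dy (Phi1 eps m t) (u1 t) (u2 t) = Czero /\
  u1 t <> Czero /\
  dx (dx (Phi1 eps m t)) (u1 t) (u2 t) <> Czero /\
  dy (dy (Phi1 eps m t)) (u1 t) (u2 t) <> Czero.

Lemma critical_Phi1_x (t : nat -> Cx) : D t -> Phi1_x eps m t (u1 t) (u2 t) = Czero.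
Proof.
  intros Dt. rewrite <- (Cdiff2_dx _ _ _ (Cdiff2_Phi1 eps m t)). exact (proj1 (critical t Dt)).
Qed.

Lemma critical_Phi1_y (t : nat -> Cx) : D t -> Phi1_y eps m t (u1 t) (u2 t) = Czero.
Proof.
  intros Dt. rewrite <- (Cdiff2_dy _ _ _ (Cdiff2_Phi1 eps m t)). now destruct (critical t Dt) as (_ & H & _).
Qed.

Variable t : nat -> Cx.
Hypothesis Dt : D t.

Lemma critical_Phi1_xy : Phi1_xy eps m t (u1 t) (u2 t) = Czero.
Proof.
  apply (Cmul_reg_l (u1 t)); [now destruct (critical t Dt) as (_ & _ & H & _)|].
  rewrite Phi1_xy_mul_x, critical_Phi1_x, critical_Phi1_y by exact Dt. ring.
Qed.

Lemma critical_x_deriv (k : nat) : (k <= m)%nat ->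
  Cadd (Cmul eps (lam1 eps k (u1 t) (u2 t)))
       (Cmul (Phi1_xx eps m t (u1 t) (u2 t)) (dt u1 k t)) = Czero.
Proof.
  intros Hk.
  assert (E := lin_comb_level_set_deriv m D _ _ _ u1 u2 t k _ _
                 (fun j => Cdiff2_scale eps _ _ _ (Cdiff2_lam1 eps j)) D_open
                 critical_Phi1_x Dt Hk (proj1 (u1_C1 k Hk) t Dt) (proj1 (u2_C1 k Hk) t Dt)).
  change (Cadd (Cmul eps (lam1 eps k (u1 t) (u2 t)))
            (Cadd (Cmul (Phi1_xx eps m t (u1 t) (u2 t)) (dt u1 k t))
                  (Cmul (Phi1_xy eps m t (u1 t) (u2 t)) (dt u2 k t))) = Czero) in E.
  rewrite critical_Phi1_xy in E. rewrite <- E. ring.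
Qed.

Lemma critical_y_deriv (k : nat) : (k <= m)%nat ->
  Cadd (F1 eps k (u1 t) (u2 t)) (Cmul (Phi1_yy eps m t (u1 t) (u2 t)) (dt u2 k t)) = Czero.
Proof.
  intros Hk.
  assert (E := lin_comb_level_set_deriv m D _ _ _ u1 u2 t k _ _ (Cdiff2_F1 eps) D_open
                 critical_Phi1_y Dt Hk (proj1 (u1_C1 k Hk) t Dt) (proj1 (u2_C1 k Hk) t Dt)).
  change (Cadd (F1 eps k (u1 t) (u2 t))
            (Cadd (Cmul (Phi1_xy eps m t (u1 t) (u2 t)) (dt u1 k t))
                  (Cmul (Phi1_yy eps m t (u1 t) (u2 t)) (dt u2 k t))) = Czero) in E.
  rewrite critical_Phi1_xy in E. rewrite <- E. ring.
Qed.

Lemma dt_u1_ratio (k : nat) : (k <= m)%nat ->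
  dt u1 k t = Cmul (lam1 eps k (u1 t) (u2 t)) (dt u1 0 t).
Proof.
  intros Hk. apply (Clinear_ratio (Phi1_xx eps m t (u1 t) (u2 t)) eps).
  - rewrite <- (Cdiff2_dx _ _ _ (Cdiff2_Phi1_x eps m t)), <- (Cdiff2_dx _ _ _ (Cdiff2_Phi1 eps m t)).
    now destruct (critical t Dt) as (_ & _ & _ & H & _).
  - rewrite <- (critical_x_deriv 0) by lia. rewrite lam1_0. ring.
  - rewrite <- (critical_x_deriv k Hk). ring.
Qed.

Lemma dt_u2_ratio (k : nat) : (k <= m)%nat ->
  dt u2 k t = Cmul (lam2 eps k (u1 t) (u2 t)) (dt u2 0 t).
Proof.
  intros Hk. apply (Clinear_ratio (Phi1_yy eps m t (u1 t) (u2 t)) Cone).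
  - rewrite <- (Cdiff2_dy _ _ _ (Cdiff2_Phi1_y eps m t)), <- (Cdiff2_dy _ _ _ (Cdiff2_Phi1 eps m t)).
    now destruct (critical t Dt) as (_ & _ & _ & _ & H).
  - rewrite <- (critical_y_deriv 0) by lia. rewrite F1_0. ring.
  - rewrite <- (critical_y_deriv k Hk). unfold lam2. ring.
Qed.

End Critical_point.

Theorem mainTheorem8 (eps : Cx) (Heps : eps <> Czero) :
  (* (a) *)
  (forall (k : nat) (x y : Cx),
     (* coefficient of z^k in  x d^2 eta_1/dxdy = d eta_1/dx - eps d eta_1/dy *)
     (pdx (F1 eps k) x y (dx (F1 eps k) x y) /\
      pdy (F1 eps k) x y (dy (F1 eps k) x y) /\
      exists Lxy, pdy (dx (F1 eps k)) x y Lxy /\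
        Cmul x Lxy = Csub (dx (F1 eps k) x y) (Cmul eps (dy (F1 eps k) x y))) /\
     pdy (F1 eps (S k)) x y (F1 eps k x y) /\
     (exists L, pdx (F1 eps (S k)) x y L /\
        Cmul (Cinv eps) L = Csum (fun i => Cmul (Cpow x i) (F1 eps (k - i) x y)) (S k))) /\
  (* (b) *)
  (forall (m : nat) (D : (nat -> Cx) -> Prop) (u1 u2 : (nat -> Cx) -> Cx),
     (1 <= m)%nat -> isOpen m D -> C1_on m D u1 -> C1_on m D u2 ->
     (forall t, D t ->
        dx (Phi1 eps m t) (u1 t) (u2 t) = Czero /\
        dy (Phi1 eps m t) (u1 t) (u2 t) = Czero /\
        u1 t <> Czero /\
        dx (dx (Phi1 eps m t)) (u1 t) (u2 t) <> Czero /\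
        dy (dy (Phi1 eps m t)) (u1 t) (u2 t) <> Czero) ->
     forall t, D t ->
       (forall k, (1 <= k <= m)%nat ->
          dt u1 k t = Cmul (lam1 eps k (u1 t) (u2 t)) (dt u1 0 t) /\
          dt u2 k t = Cmul (lam2 eps k (u1 t) (u2 t)) (dt u2 0 t)) /\
       lam1 eps 1 (u1 t) (u2 t) = Cadd (Cmul (Cadd Cone eps) (u1 t)) (u2 t) /\
       lam2 eps 1 (u1 t) (u2 t) = Cadd (Cmul eps (u1 t)) (u2 t)).
Proof.
  split.
  - intros k x y. exact (F1_derivative_identities eps k x y Heps).
  - intros m D u1 u2 _ HD Hu1 Hu2 Hcrit t Ht. split; [|split].
    + intros k Hk. split.
      * exact (dt_u1_ratio eps m D u1 u2 HD Hu1 Hu2 Hcrit t Ht k ltac:(lia)).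
      * exact (dt_u2_ratio eps m D u1 u2 HD Hu1 Hu2 Hcrit t Ht k ltac:(lia)).
    + apply lam1_1.
    + apply F1_1.
Qed.
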